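(* Let $N\ge 2$, $R>0$, $p>0$ and consider $$\Delta u=v^p,\qquad \Delta v=e^{|\nabla u|}\qquad\text{in } B_R.$$ Then every positive radial solution $(u,v)$ of this system is either bounded (both $u$ and $v$ bounded in $B_R$) or satisfies: $u$ is bounded in $B_R$ and $\lim_{|x|\nearrow R}v(x)=\infty$.
   Context: $B_R\subset\mathbb{R}^N$ is the open ball of radius $R$ centred at the origin. A positive radial solution is a pair of radially symmetric functions $u,v\in C^2(B_R)$, positive in $B_R$, satisfying the equations pointwise. *)

From Stdlib Require Import Reals Lra Lia.
Open Scope R_scope.

(* Points of R^N are represented as [nat -> R]; only the coordinates
   0..N-1 are ever used (norm, partial derivatives). *)
Definition vec := nat -> R.

Fixpoint sumN (n : nat) (f : nat -> R) : R :=
  match n with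
  | O => 0
  | S k => sumN k f + f k
  end.

Definition normN (N : nat) (x : vec) : R := sqrt (sumN N (fun i => x i ^ 2)).

Definition vsub (x y : vec) : vec := fun i => x i - y i.

Definition in_ball (N : nat) (R0 : R) (x : vec) : Prop := normN N x < R0.

Definition shift (x : vec) (i : nat) (t : R) : vec :=
  fun j => if Nat.eqb j i then x j + t else x j.

Definition is_partial (f : vec -> R) (x : vec) (i : nat) (l : R) : Prop :=
  derivable_pt_lim (fun t => f (shift x i t)) 0 l.

Definition cont_on_ball (N : nat) (R0 : R) (g : vec -> R) : Prop :=
  forall x, in_ball N R0 x ->
  forall eps, 0 < eps -> exists delta, 0 < delta /\
    forall y, in_ball N R0 y -> normN N (vsub y x) < delta ->
      Rabs (g y - g x) < eps.

(* f is C^2 on B_R, with first partials Df i = d_i f and second partials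
   D2f i j = d_j d_i f, all existing and continuous in B_R. *)
Definition C2_on_ball (N : nat) (R0 : R) (f : vec -> R)
    (Df : nat -> vec -> R) (D2f : nat -> nat -> vec -> R) : Prop :=
  (forall x, in_ball N R0 x -> forall i, (i < N)%nat ->
     is_partial f x i (Df i x) /\
     forall j, (j < N)%nat -> is_partial (Df i) x j (D2f i j x)) /\
  cont_on_ball N R0 f /\
  (forall i, (i < N)%nat -> cont_on_ball N R0 (Df i)) /\
  (forall i j, (i < N)%nat -> (j < N)%nat -> cont_on_ball N R0 (D2f i j)).

Definition laplacian (N : nat) (D2f : nat -> nat -> vec -> R) (x : vec) : R :=
  sumN N (fun i => D2f i i x).
Definition grad_norm (N : nat) (Df : nat -> vec -> R) (x : vec) : R :=
  sqrt (sumN N (fun i => Df i x ^ 2)).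

Definition radial_on_ball (N : nat) (R0 : R) (f : vec -> R) : Prop :=
  forall x y, in_ball N R0 x -> in_ball N R0 y -> normN N x = normN N y ->
    f x = f y.

Definition pos_radial_solution (N : nat) (R0 p : R) (u v : vec -> R) : Prop :=
  exists (Du : nat -> vec -> R) (D2u : nat -> nat -> vec -> R)
         (Dv : nat -> vec -> R) (D2v : nat -> nat -> vec -> R),
    C2_on_ball N R0 u Du D2u /\ C2_on_ball N R0 v Dv D2v /\
    radial_on_ball N R0 u /\ radial_on_ball N R0 v /\
    (forall x, in_ball N R0 x -> 0 < u x /\ 0 < v x) /\
    (forall x, in_ball N R0 x ->
       laplacian N D2u x = Rpower (v x) p /\
       laplacian N D2v x = exp (grad_norm N Du x)).

Definition bounded_on_ball (N : nat) (R0 : R) (f : vec -> R) : Prop :=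
  exists M, forall x, in_ball N R0 x -> Rabs (f x) <= M.

Definition blows_up_at_boundary (N : nat) (R0 : R) (f : vec -> R) : Prop :=
  forall M, exists delta, 0 < delta /\
    forall x, in_ball N R0 x -> R0 - delta < normN N x -> M < f x.

From Stdlib Require Import Reals Lra Lia Classical FunctionalExtensionality.
Open Scope R_scope.

(* Along the first coordinate axis write [phi r = u (r e_0)] and [gam r = v (r e_0)].  Radial
   symmetry turns the system into [(r^n phi')' = r^n gam^p] and [(r^n gam')' >= r^n exp phi']
   with [n = N - 1] (using [|grad u| >= d_0 u]).  The weighted derivatives vanish at [0], so
   [phi' >= 0] and [gam' >= 0]: [v] is either bounded or blows up at the boundary, and it
   remains to bound [phi].  Away from the origin, once [W = r^n phi'] has reached a level [B],
   [phi' >~ B] makes [gam'] grow like [exp B], which drives [W] past [2 B] within a window of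
   length [exp (- lambda B)].  So [W] doubles on windows so short that [phi], whose increment
   on a window is at most [W] times its length, gains only a convergent sum
   [sum_k 2^k exp (- lambda 2^k)] along the way. *)

Lemma MVT_lower_bound (h h' : R -> R) a b m :
  a <= b -> (forall c, a <= c <= b -> derivable_pt_lim h c (h' c)) ->
  (forall c, a < c < b -> m <= h' c) -> m * (b - a) <= h b - h a.
Proof.
  intros Hab Hd Hm. destruct (Req_dec a b) as [<-|Hne].
  - replace (a - a) with 0 by ring. lra.
  - destruct (MVT_cor2 h h' a b) as [c [-> Hc]]; [lra | exact Hd |].
    apply Rmult_le_compat_r; [lra | apply Hm, Hc].
Qed.

Lemma MVT_upper_bound (h h' : R -> R) a b m :
  a <= b -> (forall c, a <= c <= b -> derivable_pt_lim h c (h' c)) ->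
  (forall c, a < c < b -> h' c <= m) -> h b - h a <= m * (b - a).
Proof.
  intros Hab Hd Hm. destruct (Req_dec a b) as [<-|Hne].
  - replace (a - a) with 0 by ring. lra.
  - destruct (MVT_cor2 h h' a b) as [c [-> Hc]]; [lra | exact Hd |].
    apply Rmult_le_compat_r; [lra | apply Hm, Hc].
Qed.

Lemma derivable_pt_lim_translate (F : R -> R) x l :
  derivable_pt_lim (fun h => F (x + h)) 0 l -> derivable_pt_lim F x l.
Proof.
  intros H eps Heps. destruct (H eps Heps) as [d Hd]. exists d. intros h Hh Hhd.
  pose proof (Hd h Hh Hhd) as Hq. rewrite Rplus_0_l, Rplus_0_r in Hq. exact Hq.
Qed.

Lemma derivable_pt_lim_mul_id_0 (H : R -> R) :
  continuity_pt H 0 -> derivable_pt_lim (fun h => h * H h) 0 (H 0).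
Proof.
  intros Hc eps Heps. destruct (Hc eps Heps) as [alp [Halp Hal]].
  exists (mkposreal _ Halp). intros h Hh Hhd. simpl in Hhd.
  replace ((0 + h) * H (0 + h) - 0 * H 0) with (h * H h) by (rewrite Rplus_0_l; ring).
  replace (h * H h / h - H 0) with (H h - H 0) by (field; exact Hh).
  apply (Hal h). split; [split; [exact I | auto] |]. simpl. unfold R_dist.
  rewrite Rminus_0_r. exact Hhd.
Qed.

Lemma exp_le a b : a <= b -> exp a <= exp b.
Proof. intros [H | ->]; [left; apply exp_increasing, H | right; reflexivity]. Qed.

Lemma Rpower_pos x y : 0 < Rpower x y.
Proof. apply exp_pos. Qed.

Lemma sqr_div4_lt_exp x : 0 <= x -> x * x / 4 < exp x.
Proof.
  intros Hx. replace (exp x) with (exp (x / 2) * exp (x / 2))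
    by (rewrite <- exp_plus; f_equal; field).
  pose proof (exp_ineq1_le (x / 2)). nra.
Qed.

Lemma lt_mul_exp alpha mu B : 0 < alpha -> 0 < mu ->
  4 / (alpha * (mu * mu)) <= B -> B < alpha * exp (mu * B).
Proof.
  intros Ha Hm HB.
  assert (Hamm : 0 < alpha * (mu * mu)) by (apply Rmult_lt_0_compat; nra).
  assert (H4 : 4 <= alpha * (mu * mu) * B).
  { apply (Rmult_le_compat_l (alpha * (mu * mu))) in HB; [| lra].
    replace (alpha * (mu * mu) * (4 / (alpha * (mu * mu)))) with 4 in HB by (field; lra).
    exact HB. }
  assert (HB0 : 0 < B) by nra.
  pose proof (sqr_div4_lt_exp (mu * B) ltac:(nra)). nra.
Qed.

Lemma two_mul_exp_neg_le lambda B : 0 < lambda -> 0 < B ->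
  2 * B * exp (- (lambda * B)) <= 8 / (lambda * lambda) / B.
Proof.
  intros Hl HB. pose proof (sqr_div4_lt_exp (lambda * B) ltac:(nra)) as Hexp.
  pose proof (exp_pos (lambda * B)). rewrite exp_Ropp.
  assert (Hl2B : 0 < lambda * lambda * B) by (repeat apply Rmult_lt_0_compat; lra).
  apply (Rmult_le_reg_r (exp (lambda * B) * (lambda * lambda * B))); [nra |].
  replace (2 * B * / exp (lambda * B) * (exp (lambda * B) * (lambda * lambda * B)))
    with (2 * (lambda * B) * (lambda * B)) by (field; lra).
  replace (8 / (lambda * lambda) / B * (exp (lambda * B) * (lambda * lambda * B)))
    with (8 * exp (lambda * B)) by (field; lra).
  lra.
Qed.

Lemma derivable_pt_lim_pow_mul n (y y' : R -> R) t :
  derivable_pt_lim y t (y' t) ->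
  derivable_pt_lim (fun s => s ^ n * y s) t (INR n * t ^ pred n * y t + t ^ n * y' t).
Proof. intros Hy. exact (derivable_pt_lim_mult _ _ t _ _ (derivable_pt_lim_pow t n) Hy). Qed.

(* The radial Laplacian in [n + 1] dimensions, in divergence form. *)
Lemma pow_mul_deriv_eq n t y y' : (1 <= n)%nat -> t <> 0 ->
  INR n * t ^ pred n * y + t ^ n * y' = t ^ n * (y' + INR n * y / t).
Proof. intros Hn Ht. destruct n as [|m]; [lia |]. simpl pred. simpl pow. field. exact Ht. Qed.

Lemma derivable_pt_lim_radial_weight n (y y' : R -> R) t : (1 <= n)%nat -> t <> 0 ->
  derivable_pt_lim y t (y' t) ->
  derivable_pt_lim (fun s => s ^ n * y s) t (t ^ n * (y' t + INR n * y t / t)).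
Proof.
  intros Hn Ht Hy. rewrite <- pow_mul_deriv_eq by assumption.
  exact (derivable_pt_lim_pow_mul n y y' t Hy).
Qed.

(* [t^n y] vanishes at [0] and is nondecreasing. *)
Lemma nonneg_of_radial_weight_deriv n (y y' : R -> R) R0 : (1 <= n)%nat ->
  (forall t, 0 <= t < R0 -> derivable_pt_lim y t (y' t)) ->
  (forall t, 0 < t < R0 -> 0 <= y' t + INR n * y t / t) ->
  forall t, 0 < t < R0 -> 0 <= y t.
Proof.
  intros Hn Hd Hsg t Ht.
  assert (Hw : 0 * (t - 0) <= t ^ n * y t - 0 ^ n * y 0).
  { apply (MVT_lower_bound (fun s => s ^ n * y s)
             (fun c => INR n * c ^ pred n * y c + c ^ n * y' c)); [lra | |].
    - intros c Hc. apply derivable_pt_lim_pow_mul, Hd. lra.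
    - intros c Hc. rewrite pow_mul_deriv_eq by (lia || lra).
      apply Rmult_le_pos; [apply pow_le; lra | apply Hsg; lra]. }
  rewrite pow_i in Hw by lia. pose proof (pow_lt t n (proj1 Ht)). nra.
Qed.

Section Doubling.

Variables (phi w delta : R -> R) (a R0 K A D : R).
Hypotheses (HK : 0 < K) (HA : 0 < A).
Hypothesis phi_mono : forall s t, a <= s -> s <= t -> t < R0 -> phi s <= phi t.
Hypothesis w_mono : forall s t, a <= s -> s <= t -> t < R0 -> w s <= w t.
Hypothesis phi_increment :
  forall s t, a <= s -> s <= t -> t < R0 -> phi t - phi s <= K * w t * (t - s).
Hypothesis delta_pos : forall B, A <= B -> 0 < delta B.
Hypothesis delta_small : forall B, A <= B -> 2 * B * delta B <= D / B.
Hypothesis w_doubles : forall s B, a <= s -> A <= B -> B <= w s -> s + delta B < R0 ->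
  2 * B < w (s + delta B).

Lemma window_constant_pos : 0 < K * D / A.
Proof.
  pose proof (delta_small A (Rle_refl A)) as Hs. pose proof (delta_pos A (Rle_refl A)).
  assert (HDA : 0 < D / A)
    by (eapply Rlt_le_trans; [| exact Hs]; repeat apply Rmult_lt_0_compat; lra).
  unfold Rdiv in *. rewrite Rmult_assoc. apply Rmult_lt_0_compat; assumption.
Qed.

Lemma increment_in_window B s t : a <= s -> s <= t -> t < R0 -> A <= B ->
  t - s <= delta B -> w t <= 2 * B -> phi t - phi s <= K * D / B.
Proof.
  intros Hs Hst Ht HB Hd Hw.
  apply Rle_trans with (K * (2 * B * delta B)).
  - eapply Rle_trans; [apply phi_increment; lra |].
    rewrite Rmult_assoc. apply Rmult_le_compat_l; [lra |].
    apply Rle_trans with (2 * B * (t - s));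
      [apply Rmult_le_compat_r | apply Rmult_le_compat_l]; lra.
  - replace (K * D / B) with (K * (D / B)) by (unfold Rdiv; ring).
    apply Rmult_le_compat_l; [lra | apply delta_small, HB].
Qed.

Lemma w_below_before_window B t : A <= B -> a <= t - delta B -> t < R0 ->
  w t <= 2 * B -> w (t - delta B) < B.
Proof.
  intros HB Ha Ht Hw. apply Rnot_le_lt. intros HBw.
  pose proof (w_doubles (t - delta B) B Ha HB HBw ltac:(lra)) as Hd.
  replace (t - delta B + delta B) with t in Hd by ring. lra.
Qed.

(* Above [tA], the level [w <= 2^k A] is reached within [k + 1] windows of
   lengths [delta (2^j A)], whose increments form a geometric series. *)
Lemma increment_dyadic tA : a <= tA < R0 -> A <= w tA ->
  forall k t, tA <= t < R0 -> w t <= 2 ^ k * A ->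
  phi t - phi tA <= K * D / A * (3 - 2 / 2 ^ k).
Proof.
  intros HtA HwA.
  pose proof window_constant_pos as HKD.
  induction k as [|k IH]; intros t Ht Hw; simpl pow in *.
  - assert (Hwin : t - tA <= delta A).
    { apply Rnot_lt_le. intros Hlt. pose proof (delta_pos A (Rle_refl A)).
      pose proof (w_below_before_window A t (Rle_refl A) ltac:(lra) ltac:(lra) ltac:(lra)).
      pose proof (w_mono tA (t - delta A) ltac:(lra) ltac:(lra) ltac:(lra)). lra. }
    replace (3 - 2 / 1) with 1 by field. rewrite Rmult_1_r.
    apply increment_in_window; lra.
  - set (B := 2 ^ k * A).
    assert (Hk : 1 <= 2 ^ k) by (apply pow_R1_Rle; lra).
    assert (HAB : A <= B) by (unfold B; nra).
    assert (HKDB : K * D / B = K * D / A / 2 ^ k) by (unfold B; field; split; lra).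
    assert (Hgeo : 3 - 2 / (2 * 2 ^ k) = 3 - 2 / 2 ^ k + / 2 ^ k) by (field; lra).
    rewrite Hgeo.
    assert (Hq : 0 < / 2 ^ k <= 1).
    { split; [apply Rinv_0_lt_compat; lra |]. rewrite <- Rinv_1. apply Rinv_le_contravar; lra. }
    replace (2 * 2 ^ k * A) with (2 * B) in Hw by (unfold B; ring).
    destruct (Rle_or_lt (t - delta B) tA) as [Hnear | Hfar].
    + pose proof (increment_in_window B tA t ltac:(lra) ltac:(lra) ltac:(lra) HAB ltac:(lra) Hw)
        as Hwin.
      rewrite HKDB in Hwin. unfold Rdiv in *. nra.
    + pose proof (delta_pos B HAB).
      pose proof (w_below_before_window B t HAB ltac:(lra) ltac:(lra) Hw).
      pose proof (IH (t - delta B) ltac:(lra) ltac:(fold B; lra)).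
      pose proof (increment_in_window B (t - delta B) t ltac:(lra) ltac:(lra) ltac:(lra) HAB
                    ltac:(lra) Hw).
      rewrite HKDB in *. unfold Rdiv in *. lra.
Qed.

Lemma bounded_of_doubling : exists M, forall t, a <= t < R0 -> phi t <= M.
Proof.
  destruct (classic (exists tA, a <= tA < R0 /\ A <= w tA)) as [[tA [HtA HwA]] | Hsmall].
  - exists (phi tA + 3 * (K * D / A)). intros t Ht. pose proof window_constant_pos.
    destruct (Rle_or_lt tA t) as [Hle | Hlt].
    + destruct (Pow_x_infinity 2 ltac:(rewrite Rabs_pos_eq; lra) (w t / A)) as [k Hk].
      specialize (Hk k (Nat.le_refl k)). rewrite Rabs_pos_eq in Hk by (apply pow_le; lra).
      assert (Hwk : w t <= 2 ^ k * A).
      { apply Rge_le, (Rmult_le_compat_r A) in Hk; [| lra].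
        unfold Rdiv in Hk. rewrite Rmult_assoc, Rinv_l, Rmult_1_r in Hk; lra. }
      pose proof (increment_dyadic tA HtA HwA k t ltac:(lra) Hwk).
      assert (0 < 2 / 2 ^ k) by (apply Rdiv_lt_0_compat; [lra | apply pow_lt; lra]).
      nra.
    + pose proof (phi_mono t tA ltac:(lra) ltac:(lra) ltac:(lra)). lra.
  - exists (phi a + K * A * (R0 - a)). intros t Ht.
    assert (Hw : w t < A) by (apply Rnot_le_lt; intros Hw; apply Hsmall; exists t; auto).
    assert (K * w t * (t - a) <= K * A * (R0 - a)).
    { apply Rle_trans with (K * A * (t - a)).
      - apply Rmult_le_compat_r; [lra | apply Rmult_le_compat_l; lra].
      - apply Rmult_le_compat_l; [nra | lra]. }
    pose proof (phi_increment a t ltac:(lra) ltac:(lra) ltac:(lra)). lra.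
Qed.

End Doubling.

Section RadialSystem.

Variables (R0 p : R) (n : nat) (phi phi1 phi2 gam gam1 gam2 : R -> R).
Hypotheses (Hn : (1 <= n)%nat) (HR0 : 0 < R0) (Hp : 0 < p).
Hypothesis phi_deriv : forall t, 0 <= t < R0 -> derivable_pt_lim phi t (phi1 t).
Hypothesis phi1_deriv : forall t, 0 <= t < R0 -> derivable_pt_lim phi1 t (phi2 t).
Hypothesis gam_deriv : forall t, 0 <= t < R0 -> derivable_pt_lim gam t (gam1 t).
Hypothesis gam1_deriv : forall t, 0 <= t < R0 -> derivable_pt_lim gam1 t (gam2 t).
Hypothesis gam_pos : forall t, 0 <= t < R0 -> 0 < gam t.
Hypothesis phi_ode : forall t, 0 < t < R0 -> phi2 t + INR n * phi1 t / t = Rpower (gam t) p.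
Hypothesis gam_ode : forall t, 0 < t < R0 -> exp (phi1 t) <= gam2 t + INR n * gam1 t / t.

Lemma phi1_nonneg t : 0 < t < R0 -> 0 <= phi1 t.
Proof.
  apply (nonneg_of_radial_weight_deriv n phi1 phi2 R0 Hn phi1_deriv).
  intros s Hs. rewrite phi_ode by exact Hs. left; apply Rpower_pos.
Qed.

Lemma gam1_nonneg t : 0 < t < R0 -> 0 <= gam1 t.
Proof.
  apply (nonneg_of_radial_weight_deriv n gam1 gam2 R0 Hn gam1_deriv).
  intros s Hs. eapply Rle_trans; [left; apply exp_pos | apply gam_ode, Hs].
Qed.

Lemma phi_nondecreasing s t : 0 <= s -> s <= t -> t < R0 -> phi s <= phi t.
Proof.
  intros Hs Hst Ht. assert (0 * (t - s) <= phi t - phi s); [| lra].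
  apply MVT_lower_bound with phi1; [lra | intros c Hc; apply phi_deriv; lra |].
  intros c Hc. apply phi1_nonneg. lra.
Qed.

Lemma gam_nondecreasing s t : 0 <= s -> s <= t -> t < R0 -> gam s <= gam t.
Proof.
  intros Hs Hst Ht. assert (0 * (t - s) <= gam t - gam s); [| lra].
  apply MVT_lower_bound with gam1; [lra | intros c Hc; apply gam_deriv; lra |].
  intros c Hc. apply gam1_nonneg. lra.
Qed.

Let a := R0 / 2.
Let c1 := a ^ n.
Let c2 := R0 ^ n.
Let W t := t ^ n * phi1 t.
Let G t := t ^ n * gam1 t.

Lemma c1_pos : 0 < c1.
Proof. apply pow_lt. unfold a. lra. Qed.

Lemma c2_pos : 0 < c2.
Proof. apply pow_lt. exact HR0. Qed.

Lemma weight_bounds t : a <= t <= R0 -> c1 <= t ^ n <= c2.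
Proof. intros Ht. unfold c1, c2, a in *. split; apply pow_incr; lra. Qed.

Lemma W_deriv t : 0 < t < R0 -> derivable_pt_lim W t (t ^ n * Rpower (gam t) p).
Proof.
  intros Ht. rewrite <- phi_ode by exact Ht.
  apply derivable_pt_lim_radial_weight; [exact Hn | lra | apply phi1_deriv; lra].
Qed.

Lemma G_deriv t : 0 < t < R0 -> derivable_pt_lim G t (t ^ n * (gam2 t + INR n * gam1 t / t)).
Proof.
  intros Ht. apply derivable_pt_lim_radial_weight; [exact Hn | lra | apply gam1_deriv; lra].
Qed.

Lemma G_nonneg t : 0 < t < R0 -> 0 <= G t.
Proof. intros Ht. apply Rmult_le_pos; [apply pow_le; lra | apply gam1_nonneg, Ht]. Qed.

Lemma W_nondecreasing s t : 0 < s -> s <= t -> t < R0 -> W s <= W t.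
Proof.
  intros Hs Hst Ht. assert (0 * (t - s) <= W t - W s); [| lra].
  apply MVT_lower_bound with (fun c => c ^ n * Rpower (gam c) p);
    [lra | intros c Hc; apply W_deriv; lra |].
  intros c Hc. apply Rmult_le_pos; [apply pow_le; lra | left; apply Rpower_pos].
Qed.

Lemma c1_phi1_le_W t : a <= t < R0 -> c1 * phi1 t <= W t.
Proof.
  intros Ht. apply Rmult_le_compat_r; [apply phi1_nonneg; unfold a in *; lra |].
  apply weight_bounds. lra.
Qed.

Lemma W_le_c2_phi1 t : a <= t < R0 -> W t <= c2 * phi1 t.
Proof.
  intros Ht. apply Rmult_le_compat_r; [apply phi1_nonneg; unfold a in *; lra |].
  apply weight_bounds. lra.
Qed.

Lemma G_le_c2_gam1 t : a <= t < R0 -> G t <= c2 * gam1 t.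
Proof.
  intros Ht. apply Rmult_le_compat_r; [apply gam1_nonneg; unfold a in *; lra |].
  apply weight_bounds. lra.
Qed.

Lemma phi_increment s t : a <= s -> s <= t -> t < R0 -> phi t - phi s <= / c1 * W t * (t - s).
Proof.
  intros Hs Hst Ht. pose proof c1_pos as Hc1.
  apply MVT_upper_bound with phi1; [lra | intros c Hc; apply phi_deriv; unfold a in *; lra |].
  intros c Hc. apply (Rmult_le_reg_l c1); [exact Hc1 |].
  rewrite <- Rmult_assoc, Rinv_r, Rmult_1_l by lra.
  eapply Rle_trans; [apply c1_phi1_le_W; lra | apply W_nondecreasing; unfold a in *; lra].
Qed.

Lemma G_lower_bound s t B : a <= s -> s <= t -> t < R0 -> B <= W s ->
  c1 * exp (B / c2) * (t - s) <= G t.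
Proof.
  intros Hs Hst Ht HB.
  assert (c1 * exp (B / c2) * (t - s) <= G t - G s).
  2: { pose proof (G_nonneg s ltac:(unfold a in *; lra)). lra. }
  apply MVT_lower_bound with (fun c => c ^ n * (gam2 c + INR n * gam1 c / c));
    [lra | intros c Hc; apply G_deriv; unfold a in *; lra |].
  intros c Hc.
  assert (Hexp : exp (B / c2) <= exp (phi1 c)).
  { apply exp_le. pose proof c2_pos.
    apply (Rmult_le_reg_l c2); [pose proof c1_pos; lra |].
    replace (c2 * (B / c2)) with B by (field; pose proof c1_pos; lra).
    apply Rle_trans with (W c); [| apply W_le_c2_phi1; lra].
    eapply Rle_trans; [exact HB | apply W_nondecreasing; unfold a in *; lra]. }
  pose proof (gam_ode c ltac:(unfold a in *; lra)). pose proof (exp_pos (B / c2)).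
  pose proof (weight_bounds c ltac:(lra)). pose proof c1_pos.
  apply Rmult_le_compat; lra.
Qed.

Let kappa := c1 / (16 * c2).

Lemma gam_lower_bound s d B : a <= s -> 0 < d -> s + d < R0 -> B <= W s ->
  kappa * exp (B / c2) * (d * d) <= gam (s + d / 2).
Proof.
  intros Hs Hd Ht HB. pose proof c1_pos. pose proof c2_pos.
  set (beta := c1 * exp (B / c2) * (d / 4) / c2).
  assert (Hgam1 : forall c, s + d / 4 <= c < R0 -> beta <= gam1 c).
  { intros c Hc. apply (Rmult_le_reg_l c2); [lra |].
    replace (c2 * beta) with (c1 * exp (B / c2) * (d / 4)) by (unfold beta; field; lra).
    eapply Rle_trans; [| apply G_le_c2_gam1; lra].
    eapply Rle_trans; [| apply (G_lower_bound s c B); lra].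
    apply Rmult_le_compat_l; [pose proof (exp_pos (B / c2)); nra | lra]. }
  assert (Hincr : beta * ((s + d / 2) - (s + d / 4)) <= gam (s + d / 2) - gam (s + d / 4)).
  { apply MVT_lower_bound with gam1;
      [lra | intros c Hc; apply gam_deriv; unfold a in *; lra | intros c Hc; apply Hgam1; lra]. }
  pose proof (gam_pos (s + d / 4) ltac:(unfold a in *; lra)).
  replace (kappa * exp (B / c2) * (d * d)) with (beta * ((s + d / 2) - (s + d / 4)))
    by (unfold kappa, beta; field; lra).
  lra.
Qed.

Lemma W_lower_bound s d B : a <= s -> 0 < d -> s + d < R0 -> B <= W s ->
  B + c1 * Rpower (kappa * exp (B / c2) * (d * d)) p * (d / 2) <= W (s + d).
Proof.
  intros Hs Hd Ht HB. pose proof c1_pos. pose proof c2_pos.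
  pose proof (gam_lower_bound s d B Hs Hd Ht HB) as Hgam.
  assert (Hkappa : 0 < kappa * exp (B / c2) * (d * d)).
  { unfold kappa. pose proof (exp_pos (B / c2)).
    repeat apply Rmult_lt_0_compat; try apply Rinv_0_lt_compat; nra. }
  assert (Hincr : c1 * Rpower (kappa * exp (B / c2) * (d * d)) p * ((s + d) - (s + d / 2))
                  <= W (s + d) - W (s + d / 2)).
  { apply MVT_lower_bound with (fun c => c ^ n * Rpower (gam c) p);
      [lra | intros c Hc; apply W_deriv; unfold a in *; lra |].
    intros c Hc. apply Rmult_le_compat; [lra | left; apply Rpower_pos | apply weight_bounds; lra |].
    apply Rle_Rpower_l; [lra | split; [exact Hkappa |]].
    eapply Rle_trans; [exact Hgam | apply gam_nondecreasing; unfold a in *; lra]. }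
  pose proof (W_nondecreasing s (s + d / 2) ltac:(unfold a in *; lra) ltac:(lra) ltac:(lra)).
  replace ((s + d) - (s + d / 2)) with (d / 2) in Hincr by field. lra.
Qed.

(* Choosing the window [delta B = exp (- lambda B)] balances the exponential growth of [gam]
   against the shrinking window, leaving a net factor [exp (mu B)]. *)
Let lambda := p / (2 * c2 * (2 * p + 1)).
Let mu := p / (2 * c2).
Let delta B := exp (- (lambda * B)).
Let alpha := c1 * Rpower kappa p / 2.
Let A0 := 4 / (alpha * (mu * mu)).

Lemma W_lower_bound_window B :
  c1 * Rpower (kappa * exp (B / c2) * (delta B * delta B)) p * (delta B / 2)
  = alpha * exp (mu * B).
Proof.
  pose proof c1_pos. pose proof c2_pos.
  assert (Hkappa : 0 < kappa) by (unfold kappa; apply Rdiv_lt_0_compat; lra).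
  set (E := B / c2 + (- (lambda * B) + - (lambda * B))).
  replace (kappa * exp (B / c2) * (delta B * delta B)) with (kappa * exp E)
    by (unfold E, delta; rewrite !exp_plus; ring).
  rewrite <- Rpower_mult_distr by (apply exp_pos || exact Hkappa).
  unfold Rpower at 2. rewrite ln_exp.
  replace (mu * B) with (p * E + - (lambda * B)) by (unfold E, mu, lambda; field; lra).
  unfold alpha, delta. rewrite exp_plus. field.
Qed.

Lemma W_doubles s B : a <= s -> A0 <= B -> B <= W s -> s + delta B < R0 ->
  2 * B < W (s + delta B).
Proof.
  intros Hs HB HWs Ht. pose proof c1_pos. pose proof c2_pos.
  pose proof (W_lower_bound s (delta B) B Hs (exp_pos _) Ht HWs) as Hlow.
  rewrite W_lower_bound_window in Hlow.
  assert (B < alpha * exp (mu * B)); [| lra].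
  apply lt_mul_exp; [| unfold mu; apply Rdiv_lt_0_compat; lra | exact HB].
  unfold alpha. pose proof (Rpower_pos kappa p). nra.
Qed.

Lemma phi_bounded : exists M, forall t, 0 <= t < R0 -> phi t <= M.
Proof.
  pose proof c1_pos. pose proof c2_pos.
  assert (HA0 : 0 < A0).
  { unfold A0, alpha, mu. pose proof (Rpower_pos kappa p).
    apply Rdiv_lt_0_compat; [lra |]. apply Rmult_lt_0_compat; [nra |].
    assert (0 < p / (2 * c2)) by (apply Rdiv_lt_0_compat; lra). nra. }
  destruct (bounded_of_doubling phi W delta a R0 (/ c1) A0 (8 / (lambda * lambda)))
    as [M HM].
  - apply Rinv_0_lt_compat; lra.
  - exact HA0.
  - intros s t Hs Hst Ht. apply phi_nondecreasing; unfold a in *; lra.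
  - intros s t Hs Hst Ht. apply W_nondecreasing; unfold a in *; lra.
  - exact phi_increment.
  - intros B _. apply exp_pos.
  - intros B HB. apply two_mul_exp_neg_le; [unfold lambda; apply Rdiv_lt_0_compat; nra | lra].
  - intros s B Hs HB HWs Ht. apply W_doubles; assumption.
  - exists M. intros t Ht. destruct (Rle_or_lt a t) as [Hat | Hat]; [apply HM; lra |].
    eapply Rle_trans; [apply (phi_nondecreasing t a) | apply HM]; unfold a in *; lra.
Qed.

End RadialSystem.

Lemma sumN_ext n f g : (forall i, (i < n)%nat -> f i = g i) -> sumN n f = sumN n g.
Proof.
  induction n as [|n IH]; intros H; simpl; [reflexivity |].
  rewrite IH by (intros; apply H; lia). rewrite H by lia. reflexivity.
Qed.

Lemma sumN_add n f g : sumN n (fun j => f j + g j) = sumN n f + sumN n g.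
Proof. induction n as [|n IH]; simpl; [ring |]. rewrite IH. ring. Qed.

Lemma sumN_indicator n k c : (k < n)%nat ->
  sumN n (fun j => if Nat.eqb j k then c else 0) = c.
Proof.
  induction n as [|n IH]; intros Hk; [lia |]. simpl.
  destruct (Nat.eqb_spec n k) as [-> | Hne]; [| rewrite IH by lia; ring].
  rewrite (sumN_ext _ _ (fun _ => 0)).
  - assert (Hz : forall m, sumN m (fun _ => 0) = 0)
      by (induction m as [|m IHm]; simpl; [| rewrite IHm]; ring).
    rewrite Hz. ring.
  - intros i Hi. destruct (Nat.eqb_spec i k); [lia | reflexivity].
Qed.

Lemma sumN_S_const_tail n (F : nat -> R) b : (forall j, (1 <= j <= n)%nat -> F j = b) ->
  sumN (S n) F = F 0%nat + INR n * b.
Proof.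
  induction n as [|n IH]; intros H; [simpl; ring |].
  change (sumN (S (S n)) F) with (sumN (S n) F + F (S n)).
  rewrite IH by (intros; apply H; lia). rewrite (H (S n)) by lia. rewrite S_INR. ring.
Qed.

Lemma sumN_S_ge_first n (F : nat -> R) : (forall j, 0 <= F j) -> F 0%nat <= sumN (S n) F.
Proof.
  intros H. induction n as [|n IH]; [simpl; lra |].
  change (sumN (S (S n)) F) with (sumN (S n) F + F (S n)). pose proof (H (S n)). lra.
Qed.

Definition axis (t : R) : vec := fun j => if Nat.eqb j 0 then t else 0.

Lemma normN_axis N t : (1 <= N)%nat -> normN N (axis t) = Rabs t.
Proof.
  intros HN. unfold normN.
  rewrite (sumN_ext _ _ (fun j => if Nat.eqb j 0 then t ^ 2 else 0)).
  - rewrite sumN_indicator by lia. rewrite <- Rsqr_pow2. apply sqrt_Rsqr_abs.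
  - intros i Hi. unfold axis. destruct (Nat.eqb i 0); ring.
Qed.

Lemma axis_in_ball N R0 r : (1 <= N)%nat -> Rabs r < R0 -> in_ball N R0 (axis r).
Proof. intros HN Hr. unfold in_ball. rewrite normN_axis by exact HN. exact Hr. Qed.

Lemma shift_axis_0 t h : shift (axis t) 0 h = axis (t + h).
Proof.
  apply functional_extensionality; intros j. unfold shift, axis.
  destruct (Nat.eqb j 0); reflexivity.
Qed.

Lemma shift_shift x i s h : shift (shift x i s) i h = shift x i (s + h).
Proof.
  apply functional_extensionality; intros j. unfold shift.
  destruct (Nat.eqb j i); ring.
Qed.

Lemma normN_shift_axis N t i s : (1 <= i)%nat -> (i < N)%nat ->
  normN N (shift (axis t) i s) = sqrt (t ^ 2 + s ^ 2).
Proof.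
  intros Hi HiN. unfold normN. f_equal.
  rewrite (sumN_ext _ _ (fun j => (if Nat.eqb j 0 then t ^ 2 else 0)
                                 + (if Nat.eqb j i then s ^ 2 else 0))).
  - rewrite sumN_add, !sumN_indicator by lia. reflexivity.
  - intros j Hj. unfold shift, axis.
    destruct (Nat.eqb_spec j i) as [-> | Hne].
    + destruct (Nat.eqb_spec i 0); [lia | ring].
    + destruct (Nat.eqb j 0); ring.
Qed.

Lemma partial_along_axis f r l : is_partial f (axis r) 0 l ->
  derivable_pt_lim (fun s => f (axis s)) r l.
Proof.
  intros H. apply derivable_pt_lim_translate.
  eapply derivable_pt_lim_ext; [| exact H]. intros h. simpl. rewrite shift_axis_0. reflexivity.
Qed.

Lemma partial_along_line f x i s l : is_partial f (shift x i s) i l ->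
  derivable_pt_lim (fun r => f (shift x i r)) s l.
Proof.
  intros H. apply derivable_pt_lim_translate.
  eapply derivable_pt_lim_ext; [| exact H]. intros h. simpl. rewrite shift_shift. reflexivity.
Qed.

Lemma axis_profile_derivs N R0 f Df D2f r : (1 <= N)%nat -> C2_on_ball N R0 f Df D2f ->
  Rabs r < R0 ->
  derivable_pt_lim (fun s => f (axis s)) r (Df 0%nat (axis r)) /\
  derivable_pt_lim (fun s => Df 0%nat (axis s)) r (D2f 0%nat 0%nat (axis r)).
Proof.
  intros HN [Hp _] Hr.
  destruct (Hp (axis r) (axis_in_ball N R0 r HN Hr) 0%nat HN) as [H1 H2].
  split; apply partial_along_axis; [exact H1 | exact (H2 0%nat HN)].
Qed.

Lemma derivable_pt_lim_sqrt_sum_sq t s : 0 < t ->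
  derivable_pt_lim (fun s => sqrt (t ^ 2 + s ^ 2)) s (s / sqrt (t ^ 2 + s ^ 2)).
Proof.
  intros Ht. assert (Hpos : 0 < t ^ 2 + s ^ 2) by (pose proof (pow2_ge_0 s); nra).
  pose proof (derivable_pt_lim_plus _ _ s _ _ (derivable_pt_lim_const (t ^ 2) s)
                (derivable_pt_lim_pow s 2)) as Hg.
  pose proof (derivable_pt_lim_comp _ sqrt s _ _ Hg (derivable_pt_lim_sqrt _ Hpos)) as Hc.
  replace (s / sqrt (t ^ 2 + s ^ 2)) with (/ (2 * sqrt (t ^ 2 + s ^ 2)) * (0 + INR 2 * s ^ pred 2)).
  - exact Hc.
  - assert (0 < sqrt (t ^ 2 + s ^ 2)) by (apply sqrt_lt_R0, Hpos).
    change (INR 2) with 2. simpl pred. rewrite pow_1. field. lra.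
Qed.

Lemma sqrt_sum_sq_bounds t s : 0 <= t -> t <= sqrt (t ^ 2 + s ^ 2) <= t + Rabs s.
Proof.
  intros Ht. split.
  - rewrite <- (sqrt_pow2 t) at 1 by exact Ht. apply sqrt_le_1_alt. pose proof (pow2_ge_0 s). lra.
  - rewrite <- (sqrt_pow2 (t + Rabs s)) by (pose proof (Rabs_pos s); lra).
    apply sqrt_le_1_alt. rewrite <- (pow2_abs s). pose proof (Rabs_pos s). nra.
Qed.

(* Along the line [t e_0 + s e_i], a radial [f] is [s |-> f (axis (sqrt (t^2 + s^2)))]. *)
Lemma radial_transverse_partial N R0 f Df D2f t i s : (2 <= N)%nat ->
  C2_on_ball N R0 f Df D2f -> radial_on_ball N R0 f -> 0 < t -> (1 <= i < N)%nat ->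
  Rabs s < R0 - t ->
  Df i (shift (axis t) i s) = Df 0%nat (axis (sqrt (t ^ 2 + s ^ 2))) * (s / sqrt (t ^ 2 + s ^ 2)).
Proof.
  intros HN HC Hrad Ht Hi Hs.
  set (rho := fun s => sqrt (t ^ 2 + s ^ 2)).
  assert (Hrho : forall s', Rabs s' < R0 - t -> t <= rho s' < R0).
  { intros s' Hs'. pose proof (sqrt_sum_sq_bounds t s' ltac:(lra)). unfold rho. lra. }
  assert (Hline : forall s', Rabs s' < R0 - t -> f (axis (rho s')) = f (shift (axis t) i s')).
  { intros s' Hs'. pose proof (Hrho s' Hs'). apply Hrad.
    - apply axis_in_ball; [lia | rewrite Rabs_pos_eq; lra].
    - unfold in_ball. rewrite normN_shift_axis by lia. fold (rho s'). lra.
    - rewrite normN_axis, normN_shift_axis, Rabs_pos_eq by (lia || lra). reflexivity. }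
  assert (Hchain : derivable_pt_lim (fun s' => f (axis (rho s'))) s
                     (Df 0%nat (axis (rho s)) * (s / rho s))).
  { apply (derivable_pt_lim_comp rho (fun r => f (axis r))).
    - apply derivable_pt_lim_sqrt_sum_sq, Ht.
    - pose proof (Hrho s Hs). apply (axis_profile_derivs N R0 f Df D2f); [lia | exact HC |].
      rewrite Rabs_pos_eq; lra. }
  apply (derivable_pt_lim_locally_ext _ (fun s' => f (shift (axis t) i s')) s
           (s - (R0 - t - Rabs s)) (s + (R0 - t - Rabs s))) in Hchain.
  - destruct HC as [Hp _].
    destruct (Hp (shift (axis t) i s) ltac:(unfold in_ball; rewrite normN_shift_axis by lia;
                                            apply (Hrho s Hs)) i ltac:(lia)) as [Hpart _].
    exact (uniqueness_limite _ _ _ _ (partial_along_line f (axis t) i s _ Hpart) Hchain).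
  - lra.
  - intros z Hz. apply Hline.
    assert (Rabs (z - s) < R0 - t - Rabs s) by (apply Rabs_def1; lra).
    pose proof (Rabs_triang s (z - s)) as Htri. replace (s + (z - s)) with z in Htri by ring.
    lra.
Qed.

(* The transverse partial is [h * H h] with [H h = phi' (rho h) / rho h]. *)
Lemma radial_transverse_second N R0 f Df D2f t i : (2 <= N)%nat ->
  C2_on_ball N R0 f Df D2f -> radial_on_ball N R0 f -> 0 < t < R0 -> (1 <= i < N)%nat ->
  D2f i i (axis t) = Df 0%nat (axis t) / t.
Proof.
  intros HN HC Hrad Ht Hi.
  set (rho := fun h => sqrt (t ^ 2 + h ^ 2)).
  set (phi1 := fun r => Df 0%nat (axis r)).
  assert (Hrho0 : rho 0 = t).
  { unfold rho. replace (t ^ 2 + 0 ^ 2) with (t ^ 2) by ring. apply sqrt_pow2. lra. }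
  assert (Hrho_c : continuity_pt rho 0).
  { apply derivable_continuous_pt. exists (0 / rho 0). apply derivable_pt_lim_sqrt_sum_sq. lra. }
  assert (Hphi1_c : continuity_pt phi1 t).
  { apply derivable_continuous_pt. exists (D2f 0%nat 0%nat (axis t)).
    apply (axis_profile_derivs N R0 f Df D2f); [lia | exact HC | rewrite Rabs_pos_eq; lra]. }
  assert (HH : continuity_pt (fun h => phi1 (rho h) / rho h) 0).
  { change (continuity_pt (div_fct (comp phi1 rho) rho) 0).
    apply continuity_pt_div; [| exact Hrho_c | lra].
    apply continuity_pt_comp; [exact Hrho_c | rewrite Hrho0; exact Hphi1_c]. }
  pose proof (derivable_pt_lim_mul_id_0 _ HH) as Hd.
  apply (derivable_pt_lim_locally_ext _ (fun h => Df i (shift (axis t) i h)) 0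
           (- (R0 - t)) (R0 - t)) in Hd.
  - destruct HC as [Hp _].
    destruct (Hp (axis t) (axis_in_ball N R0 t ltac:(lia) ltac:(rewrite Rabs_pos_eq; lra)) i
                ltac:(lia)) as [_ Hsecond].
    rewrite (uniqueness_limite _ _ _ _ (Hsecond i ltac:(lia)) Hd), Hrho0. reflexivity.
  - lra.
  - intros h Hh. rewrite (radial_transverse_partial N R0 f Df D2f t i h)
      by (assumption || lra || (apply Rabs_def1; lra)).
    pose proof (sqrt_sum_sq_bounds t h ltac:(lra)). unfold phi1, rho. field. lra.
Qed.

Lemma laplacian_axis N R0 f Df D2f t : (2 <= N)%nat -> C2_on_ball N R0 f Df D2f ->
  radial_on_ball N R0 f -> 0 < t < R0 ->
  laplacian N D2f (axis t) = D2f 0%nat 0%nat (axis t) + INR (N - 1) * Df 0%nat (axis t) / t.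
Proof.
  intros HN HC Hr Ht. unfold laplacian. destruct N as [|m]; [lia |].
  replace (S m - 1)%nat with m by lia.
  rewrite (sumN_S_const_tail m _ (Df 0%nat (axis t) / t)).
  - unfold Rdiv. ring.
  - intros j Hj. apply (radial_transverse_second (S m) R0 f Df D2f t j); auto. lia.
Qed.

Lemma partial_0_le_grad_norm N Df x : (1 <= N)%nat -> Df 0%nat x <= grad_norm N Df x.
Proof.
  intros HN. unfold grad_norm. destruct N as [|N]; [lia |].
  eapply Rle_trans; [apply Rle_abs |]. rewrite <- sqrt_Rsqr_abs, Rsqr_pow2.
  apply sqrt_le_1_alt, (sumN_S_ge_first N (fun i => Df i x ^ 2)). intros; apply pow2_ge_0.
Qed.

Lemma radial_eq_axis N R0 f x : (1 <= N)%nat -> radial_on_ball N R0 f -> in_ball N R0 x ->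
  f x = f (axis (normN N x)).
Proof.
  intros HN Hr Hx. assert (Hn : 0 <= normN N x) by apply sqrt_pos.
  apply Hr; [exact Hx | |].
  - apply axis_in_ball; [exact HN |]. rewrite Rabs_pos_eq by exact Hn. exact Hx.
  - rewrite normN_axis, Rabs_pos_eq by assumption. reflexivity.
Qed.

Lemma bounded_on_ball_of_axis N R0 f M : (1 <= N)%nat -> radial_on_ball N R0 f ->
  (forall x, in_ball N R0 x -> 0 < f x) -> (forall t, 0 <= t < R0 -> f (axis t) <= M) ->
  bounded_on_ball N R0 f.
Proof.
  intros HN Hr Hpos HM. exists M. intros x Hx.
  rewrite Rabs_pos_eq by (left; apply Hpos, Hx). rewrite (radial_eq_axis N R0 f x) by assumption.
  apply HM. split; [apply sqrt_pos | exact Hx].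
Qed.

Lemma blows_up_of_axis N R0 f : (1 <= N)%nat -> radial_on_ball N R0 f ->
  (forall s t, 0 <= s -> s <= t -> t < R0 -> f (axis s) <= f (axis t)) ->
  ~ (exists M, forall t, 0 <= t < R0 -> f (axis t) <= M) ->
  blows_up_at_boundary N R0 f.
Proof.
  intros HN Hr Hmono Hunb M.
  destruct (classic (exists t0, 0 <= t0 < R0 /\ M < f (axis t0))) as [[t0 [Ht0 HM]] | Hle].
  - exists (R0 - t0). split; [lra |]. intros x Hx Hxt.
    rewrite (radial_eq_axis N R0 f x) by assumption.
    eapply Rlt_le_trans; [exact HM | apply Hmono; [lra | lra | exact Hx]].
  - exfalso. apply Hunb. exists M. intros t Ht. apply Rnot_lt_le. intros Hlt. apply Hle. eauto.
Qed.

Lemma radial_solution_axis_profiles N R0 p u v : (2 <= N)%nat -> 0 < R0 -> 0 < p ->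
  pos_radial_solution N R0 p u v ->
  (exists M, forall t, 0 <= t < R0 -> u (axis t) <= M) /\
  (forall s t, 0 <= s -> s <= t -> t < R0 -> v (axis s) <= v (axis t)).
Proof.
  intros HN HR Hp [Du [D2u [Dv [D2v [HCu [HCv [Hru [Hrv [Hpos Hpde]]]]]]]]].
  assert (Hax : forall t, 0 <= t < R0 -> Rabs t < R0 /\ in_ball N R0 (axis t)).
  { intros t Ht. assert (Rabs t < R0) by (rewrite Rabs_pos_eq; lra).
    split; [assumption | apply axis_in_ball; [lia | assumption]]. }
  pose proof (fun t Ht => axis_profile_derivs N R0 u Du D2u t ltac:(lia) HCu (proj1 (Hax t Ht)))
    as Hu'.
  pose proof (fun t Ht => axis_profile_derivs N R0 v Dv D2v t ltac:(lia) HCv (proj1 (Hax t Ht)))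
    as Hv'.
  assert (Hu_ode : forall t, 0 < t < R0 -> D2u 0%nat 0%nat (axis t)
            + INR (N - 1) * Du 0%nat (axis t) / t = Rpower (v (axis t)) p).
  { intros t Ht. rewrite <- (laplacian_axis N R0 u Du D2u) by assumption.
    apply Hpde, Hax. lra. }
  assert (Hv_ode : forall t, 0 < t < R0 -> exp (Du 0%nat (axis t))
            <= D2v 0%nat 0%nat (axis t) + INR (N - 1) * Dv 0%nat (axis t) / t).
  { intros t Ht. destruct (Hpde (axis t) (proj2 (Hax t ltac:(lra)))) as [_ Hv_pde].
    rewrite <- (laplacian_axis N R0 v Dv D2v), Hv_pde by assumption.
    apply exp_le, partial_0_le_grad_norm. lia. }
  assert (Hn : (1 <= N - 1)%nat) by lia.
  split.
  - exact (phi_bounded R0 p (N - 1) _ _ _ _ _ _ Hn HR Hp (fun t Ht => proj1 (Hu' t Ht))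
             (fun t Ht => proj2 (Hu' t Ht)) (fun t Ht => proj1 (Hv' t Ht))
             (fun t Ht => proj2 (Hv' t Ht)) (fun t Ht => proj2 (Hpos _ (proj2 (Hax t Ht))))
             Hu_ode Hv_ode).
  - exact (gam_nondecreasing R0 (N - 1) _ _ _ _ Hn (fun t Ht => proj1 (Hv' t Ht))
             (fun t Ht => proj2 (Hv' t Ht)) Hv_ode).
Qed.

Theorem corollary2p2 (N : nat) (R0 p : R) (u v : vec -> R) :
  (2 <= N)%nat -> 0 < R0 -> 0 < p ->
  pos_radial_solution N R0 p u v ->
  (bounded_on_ball N R0 u /\ bounded_on_ball N R0 v) \/
  (bounded_on_ball N R0 u /\ blows_up_at_boundary N R0 v).
Proof.
  intros HN HR Hp Hsol.
  destruct (radial_solution_axis_profiles N R0 p u v HN HR Hp Hsol) as [[M HM] Hv_mono].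
  destruct Hsol as (_ & _ & _ & _ & _ & _ & Hru & Hrv & Hpos & _).
  assert (Hu_bd : bounded_on_ball N R0 u)
    by (apply (bounded_on_ball_of_axis N R0 u M); [lia | exact Hru | apply Hpos | exact HM]).
  destruct (classic (exists M', forall t, 0 <= t < R0 -> v (axis t) <= M')) as [[M' HM'] | Hunb].
  - left. split; [exact Hu_bd |].
    apply (bounded_on_ball_of_axis N R0 v M'); [lia | exact Hrv | apply Hpos | exact HM'].
  - right. split; [exact Hu_bd |].
    apply blows_up_of_axis; [lia | exact Hrv | exact Hv_mono | exact Hunb].
Qed.
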